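(* Let $Q_k$ be a $K$-subset system, $\alpha$ an ordinal and $X$ an $\alpha^k$-special $T_0$ space. Then $\alpha$ is not a limit ordinal.
   Context: For a $K$-subset system $Q_k$ (an assignment $X\mapsto Q_k(X)$ with $\{\uparrow x\}\subseteq Q_k(X)\subseteq Q(X)$, the nonempty compact saturated sets, such that continuous images of $k$-Rudin sets are $k$-Rudin), a nonempty $A\subseteq X$ is $k$-Rudin if for some filtered $\mathcal K\subseteq Q_k(X)$, $\overline A$ is a minimal closed set meeting every member of $\mathcal K$. $K(X)$ is the set of classes of $k$-Rudin sets under $A\sim B\iff\overline A=\overline B$, with open sets $U^*=\{[A]\mid A\cap U\ne\emptyset\}$; $X$ embeds via $x\mapsto[\{x\}]$. $K_0(X)=X$, $K_{\beta+1}(X)=K(K_\beta(X))$, $K_\beta(X)=\bigcup_{\gamma<\beta}K_\gamma(X)$ for limit $\beta$. $\mathrm{rank}_k(X)$ is the least $\alpha$ with $K_\alpha(X)\cong K_{\alpha+1}(X)$. $X$ is $\alpha^k$-special if $\mathrm{rank}_k(X)=\alpha$ and $\alpha$ is the least ordinal for which $K_\alpha(X)$ has a greatest element in its specialization order. *)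

From HB Require Import structures.
From mathcomp Require Import all_boot all_order.
From mathcomp Require Import all_classical all_reals topology.
Set Implicit Arguments. Unset Strict Implicit. Unset Printing Implicit Defensive.
Import Order.TTheory.
Local Open Scope classical_set_scope.

Definition spec_le (T : topologicalType) (x y : T) : Prop := closure [set y] x.

Definition upx (T : topologicalType) (x : T) : set T := [set y | spec_le x y].

Definition saturated (T : topologicalType) (A : set T) : Prop :=
  A = \bigcap_(U in [set U : set T | open U /\ A `<=` U]) U.

Definition Qset (T : topologicalType) : set (set T) :=
  [set K | K !=set0 /\ compact K /\ saturated K].

Definition filtered (T : Type) (F : set (set T)) : Prop :=
  F !=set0 /\ forall K1 K2, F K1 -> F K2 -> exists2 K3, F K3 & K3 `<=` K1 `&` K2.

Definition min_closed_meeting (T : topologicalType) (F : set (set T)) (C : set T)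
  : Prop :=
  [/\ closed C, (forall K, F K -> C `&` K !=set0) &
      (forall D, closed D -> D `<=` C -> (forall K, F K -> D `&` K !=set0) -> D = C)].

Definition krudin (T : topologicalType) (QT : set (set T)) (A : set T) : Prop :=
  A !=set0 /\ exists F : set (set T),
    [/\ F `<=` QT, filtered F & min_closed_meeting F (closure A)].

Definition Ksubset_system (Qk : forall T : topologicalType, set (set T)) : Prop :=
  [/\ (forall (T : topologicalType) (x : T), Qk T (upx x)),
      (forall T : topologicalType, Qk T `<=` @Qset T) &
      (forall (S T : topologicalType) (f : S -> T), continuous f ->
         forall A, krudin (Qk S) A -> krudin (Qk T) (f @` A))].

Definition is_kclass (Qk : forall T : topologicalType, set (set T))
  (T : topologicalType) (C : set T) : Prop :=
  exists A, krudin (Qk T) A /\ closure A = C.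

(* K(X): classes of k-Rudin sets, each class [A] represented by closure A *)
Definition KX (Qk : forall T : topologicalType, set (set T)) (T : topologicalType)
  : Type := {C : set T | is_kclass Qk C}.

Section KXtop.
Variables (Qk : forall T : topologicalType, set (set T)) (T : topologicalType).
HB.instance Definition _ := gen_eqMixin (KX Qk T).
HB.instance Definition _ := gen_choiceMixin (KX Qk T).
(* U^* = {[A] | A meets U}; note A meets open U iff closure A does *)
Definition Kstar (U : set T) : set (KX Qk T) := [set C | proj1_sig C `&` U !=set0].
HB.instance Definition _ :=
  isSubBaseTopological.Build (KX Qk T) (@open T) Kstar.
End KXtop.

Definition homeomorphic (S T : topologicalType) : Prop :=
  exists (f : S -> T) (g : T -> S),
    [/\ continuous f, continuous g, cancel f g & cancel g f].

Definition embedding (S T : topologicalType) (f : S -> T) : Prop :=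
  [/\ continuous f, injective f &
      forall U, open U -> exists2 V, open V & f @^-1` V = U].

Definition has_top (T : topologicalType) : Prop :=
  exists t : T, forall y : T, spec_le y t.

(* ordinals are represented as elements of a well-ordered type W *)
Definition wellorder (d : Order.disp_t) (W : orderType d) : Prop :=
  well_founded (fun x y : W => (x < y)%O).

Definition is_succ (d : Order.disp_t) (W : orderType d) (i j : W) : Prop :=
  (i < j)%O /\ forall k, (i < k)%O -> (j <= k)%O.

Definition is_zero (d : Order.disp_t) (W : orderType d) (z : W) : Prop :=
  forall i, (z <= i)%O.

Definition is_limit (d : Order.disp_t) (W : orderType d) (l : W) : Prop :=
  ~ is_zero l /\ ~ (exists i, is_succ i l).

(* Y, e is (a copy of) the transfinite tower K_i(X), i in W, with the
   canonical embeddings e i j : K_i(X) -> K_j(X) for i <= j. *)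
Definition Ktower (Qk : forall T : topologicalType, set (set T))
  (X : topologicalType) (d : Order.disp_t) (W : orderType d)
  (Y : W -> topologicalType) (e : forall i j : W, Y i -> Y j) : Prop :=
  [/\ (forall i (y : Y i), e i i y = y) /\
      (forall i j k (y : Y i), (i <= j)%O -> (j <= k)%O -> e j k (e i j y) = e i k y),
      (forall i j, (i <= j)%O -> embedding (e i j)),
      (forall z, is_zero z -> exists h : X -> Y z,
          [/\ continuous h, bijective h & forall U, open U -> open (h @` U)]),
      (* K_{i+1}(X) = K(K_i(X)), with K_i(X) embedded via x |-> [{x}] *)
      (forall i j, is_succ i j -> exists (h : KX Qk (Y i) -> Y j),
          [/\ continuous h, bijective h, (forall U, open U -> open (h @` U)) &
              forall (y : Y i) (C : KX Qk (Y i)), proj1_sig C = closure [set y] ->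
                h C = e i j y]) &
      (* K_l(X) = union of the K_i(X), i < l, with the final (union) topology *)
      (forall l, is_limit l ->
          (forall y : Y l, exists i, (i < l)%O /\ exists x, e i l x = y) /\
          (forall U : set (Y l), open U <-> forall i, (i < l)%O -> open (e i l @^-1` U)))].

(* rank_k(X) = a : least a with K_a(X) homeomorphic to K_{a+1}(X) = K(K_a(X)) *)
Definition is_rank (Qk : forall T : topologicalType, set (set T))
  (d : Order.disp_t) (W : orderType d) (Y : W -> topologicalType) (a : W) : Prop :=
  homeomorphic (Y a) (KX Qk (Y a)) /\
  forall b, (b < a)%O -> ~ homeomorphic (Y b) (KX Qk (Y b)).

Definition special (Qk : forall T : topologicalType, set (set T))
  (d : Order.disp_t) (W : orderType d) (Y : W -> topologicalType) (a : W) : Prop :=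
  is_rank Qk Y a /\ has_top (Y a) /\ forall b, (b < a)%O -> ~ has_top (Y b).

Arguments Ktower Qk X {d W} Y e.
Arguments is_rank Qk {d W} Y a.
Arguments special Qk {d W} Y a.

From HB Require Import structures.
From mathcomp Require Import all_boot all_order.
From mathcomp Require Import all_classical all_reals topology.
Import Order.TTheory.
Local Open Scope classical_set_scope.

(* Suppose the rank a of an a^k-special space X were a limit
   ordinal.  Then K_a(X) is the union of the earlier stages K_i(X), i < a,
   so its greatest element t (in the specialization order) is the image
   e_{i,a}(x) of a point x of some earlier stage K_i(X).  The canonical map
   e_{i,a} is a topological embedding, and embeddings reflect the
   specialization order; hence x is a greatest element of K_i(X), which
   contradicts the minimality of a among the stages having a top. *)

(* An embedding reflects the specialization order: if f y <= f x then
   y <= x.  Every open neighbourhood of y is the preimage of an open set,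
   which then contains f y and hence f x. *)
Lemma embedding_reflects_spec_le (S T : topologicalType) (f : S -> T) (x y : S) :
  embedding f -> spec_le (f y) (f x) -> spec_le y x.
Proof.
move=> [_ _ f_open] fy_le_fx B; rewrite nbhsE => -[U [oU Uy] UB].
have [V oV preV] := f_open U oU.
have nbhs_fy : nbhs (f y) V by apply: open_nbhs_nbhs; split => //; rewrite -preV in Uy.
have [z [/= -> Vz]] := fy_le_fx V nbhs_fy.
by exists x; split => //; apply: UB; rewrite -preV.
Qed.

Lemma embedding_top_preimage (S T : topologicalType) (f : S -> T) (x : S) :
  embedding f -> (forall y : T, spec_le y (f x)) -> has_top S.
Proof.
move=> f_emb fx_top; exists x => y.
exact: embedding_reflects_spec_le f_emb (fx_top (f y)).
Qed.

Theorem mainTheorem7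
  (Qk : forall T : topologicalType, set (set T)) (HQ : Ksubset_system Qk)
  (X : topologicalType) (HT0 : kolmogorov_space X)
  (d : Order.disp_t) (W : orderType d) (HW : wellorder W)
  (Y : W -> topologicalType) (e : forall i j : W, Y i -> Y j)
  (Htower : Ktower Qk X Y e)
  (a : W) (Hspecial : special Qk Y a) :
  ~ is_limit a.
Proof.
move=> a_limit.
case: Htower => _ e_emb _ _ limit_stage.
case: Hspecial => _ [[t t_top] no_earlier_top].
(* the top t of the limit stage comes from some earlier stage i < a *)
have [i [lt_ia [x ex_t]]] := (limit_stage a a_limit).1 t.
apply: (no_earlier_top i lt_ia).
apply: (@embedding_top_preimage _ _ (e i a) x (e_emb i a (ltW lt_ia))).
by rewrite ex_t.
Qed.
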